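(* Let $P:\mathcal{X}\times\mathcal{E}\to\mathcal{Y}\times\mathcal{E}$ be an $\varepsilon$-DP RAM program for computing the mean $\frac{1}{|x|}\sum_i x_i$ of datasets $x\in\{0,1\}^*$, such that the runtime distributions satisfy $T_P(x,\mathit{env})\equiv T_P(x',\mathit{env}')$ (identically distributed) for all $x,x'\in\{0,1\}^*$ and all input-compatible $\mathit{env},\mathit{env}'\in\mathcal{E}$. Then for every $0<\beta<1$ there exist a dataset $x$ and a constant $\alpha$ such that $$\Pr\left[\Big|\mathrm{out}(P(x,\mathit{env}))-\frac{1}{|x|}\sum_i x_i\Big|>\alpha\right]>\beta .$$
   Context: Datasets are finite bit strings $x\in\{0,1\}^*$ (records are bits). A program runs on $x$ in an execution environment $\mathit{env}\in\mathcal{E}$ (initial machine state) compatible with $x$; $\mathrm{out}(P(x,\mathit{env}))$ denotes the random output and $T_P(x,\mathit{env})$ the random runtime (number of RAM instructions executed). $\varepsilon$-DP means the output distribution satisfies $\varepsilon$-differential privacy with respect to datasets at insert-delete distance at most $1$. RAM model: memory cells with arbitrary naturals, unit-cost arithmetic, Boolean ops, memory access, conditional jumps, $\texttt{RAND}(n)$ uniform on $\{0,\dots,n\}$. *)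

From Stdlib Require Import Reals Lra Lia List Arith Bool.
From Coquelicot Require Import Coquelicot.
Import ListNotations.
Open Scope R_scope.
Open Scope bool_scope.

(* All instructions cost one unit of time.  "d" = destination cell,
   "a","b" = source cells (direct addressing); ILoad/IStore give indirect
   memory access.  Boolean operations work on truth values 0 (false) /
   nonzero (true), producing 0/1. *)
Inductive instr : Type :=
| IConst (d c : nat)
| IAdd   (d a b : nat)
| ISub   (d a b : nat)        (* M[d] := M[a] - M[b]  (truncated) *)
| IMul   (d a b : nat)
| IDiv   (d a b : nat)        (* M[d] := M[a] / M[b]  (0 if M[b] = 0) *)
| IMod   (d a b : nat)
| ILt    (d a b : nat)
| IEq    (d a b : nat)
| IAnd   (d a b : nat)
| IOr    (d a b : nat)
| INot   (d a : nat)
| ILoad  (d a : nat)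
| IStore (a s : nat)
| IJz    (a l : nat)
| IRand  (d a : nat).         (* M[d] := uniform on {0,...,M[a]} *)

Definition program := list instr.

Record config := Config { pc : nat; mem : nat -> nat; steps : nat }.

Definition upd (m : nat -> nat) (d v : nat) : nat -> nat :=
  fun j => if Nat.eqb j d then v else m j.

Definition b2n (b : bool) : nat := if b then 1%nat else 0%nat.

Definition wr (c : config) (d v : nat) : config :=
  Config (S (pc c)) (upd (mem c) d v) (S (steps c)).

(* One instruction: finite probability distribution of successors. *)
Definition exec (i : instr) (c : config) : list (R * config) :=
  let m := mem c in
  match i with
  | IConst d k => [(1, wr c d k)]
  | IAdd d a b => [(1, wr c d (m a + m b)%nat)]
  | ISub d a b => [(1, wr c d (m a - m b)%nat)]
  | IMul d a b => [(1, wr c d (m a * m b)%nat)]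
  | IDiv d a b => [(1, wr c d (Nat.div (m a) (m b)))]
  | IMod d a b => [(1, wr c d (Nat.modulo (m a) (m b)))]
  | ILt d a b => [(1, wr c d (b2n (Nat.ltb (m a) (m b))))]
  | IEq d a b => [(1, wr c d (b2n (Nat.eqb (m a) (m b))))]
  | IAnd d a b => [(1, wr c d (b2n (negb (Nat.eqb (m a) 0) && negb (Nat.eqb (m b) 0))))]
  | IOr d a b => [(1, wr c d (b2n (negb (Nat.eqb (m a) 0) || negb (Nat.eqb (m b) 0))))]
  | INot d a => [(1, wr c d (b2n (Nat.eqb (m a) 0)))]
  | ILoad d a => [(1, wr c d (m (m a)))]
  | IStore a s => [(1, Config (S (pc c)) (upd m (m a) (m s)) (S (steps c)))]
  | IJz a l => [(1, Config (if Nat.eqb (m a) 0 then l else S (pc c)) m (S (steps c)))]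
  | IRand d a =>
      map (fun v => (/ INR (S (m a)), wr c d v)) (seq 0 (S (m a)))
  end.

Definition halted (P : program) (c : config) : bool := Nat.leb (length P) (pc c).

Definition step (P : program) (c : config) : list (R * config) :=
  match nth_error P (pc c) with
  | None => [(1, c)]
  | Some i => exec i c
  end.

Definition bind_step (P : program) (d : list (R * config)) : list (R * config) :=
  flat_map (fun wc => map (fun wc' => (fst wc * fst wc', snd wc')) (step P (snd wc))) d.

Fixpoint run (P : program) (k : nat) (d : list (R * config)) : list (R * config) :=
  match k with
  | O => d
  | S k' => run P k' (bind_step P d)
  end.

Definition mass (f : config -> bool) (d : list (R * config)) : R :=
  fold_right (fun wc acc => (if f (snd wc) then fst wc else 0) + acc) 0 d.

Definition init (env : nat -> nat) : list (R * config) := [(1, Config 0 env 0)].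

(* Output convention: cell 0 holds the length L, cells 1..L the output. *)
Definition output (c : config) : list nat :=
  map (fun i => mem c (S i)) (seq 0 (mem c 0)).

(* Input compatibility: cell 0 holds |x|, cells 1..|x| hold the bits of x;
   all other cells are arbitrary. *)
Definition compatible (x : list bool) (env : nat -> nat) : Prop :=
  env 0%nat = length x /\
  forall i, (i < length x)%nat -> env (S i) = b2n (nth i x false).

Definition PrOutBy (P : program) (env : nat -> nat) (k : nat) (E : list nat -> bool) : R :=
  mass (fun c => halted P c && E (output c)) (run P k (init env)).

(* Pr[out(P(x,env)) \in E]  (non-halting runs produce no output) *)
Definition PrOut (P : program) (env : nat -> nat) (E : list nat -> bool) : R :=
  real (Lim_seq (fun k => PrOutBy P env k E)).

Definition PrTime (P : program) (env : nat -> nat) (t : nat) : R :=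
  mass (fun c => halted P c && Nat.eqb (steps c) t) (run P t (init env)).

Definition insdel1 (x x' : list bool) : Prop :=
  exists (a b : list bool) (c : bool),
    (x = a ++ b /\ x' = a ++ c :: b) \/ (x' = a ++ b /\ x = a ++ c :: b).

Definition dist_le1 (x x' : list bool) : Prop := x = x' \/ insdel1 x x'.

Definition eps_DP (eps : R) (P : program) : Prop :=
  forall x x' env env', dist_le1 x x' -> compatible x env -> compatible x' env' ->
    forall E : list nat -> bool, PrOut P env E <= exp eps * PrOut P env' E.

Definition mean (x : list bool) : R :=
  fold_right (fun b acc => INR (b2n b) + acc) 0 x / INR (length x).

Definition Rleb (a b : R) : bool := if Rle_dec a b then true else false.

(* Suppose, for contradiction, that for every dataset and every accuracy radius some
   compatible environment gives an accurate answer with probability at least [1 - beta].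
   Privacy applied to the same dataset transfers this to the canonical environment
   [env_of x] with probability [c0 = (1 - beta) / e^eps]. Because the runtime distribution
   does not depend on the input, a single time bound [T] leaves at most [g] of halting
   probability still to come on every input. Fix [K] with [K c0 > 2] and run [T] steps on
   the all-zero dataset of length [n = m K]: at most [2 T] cells are read and at most [T]
   output entries are nonzero in expectation, so for [m] large some block of [K]
   consecutive input cells is rarely read and rarely exposed in the output. Turning the
   first [j <= K] cells of that block into ones moves the mean to [j/n] but, by a coupling
   of the two runs and group privacy, barely moves the output distribution. Hence the
   all-zero run is accurate for each of the [K + 1] pairwise distant means [j/n] with
   probability about [c0 / 2], and these probabilities add up to more than one. *)

From Stdlib Require Import Reals Lra Lia List Arith Bool Classical.
From Coquelicot Require Import Coquelicot.
Import ListNotations.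
Open Scope R_scope.

Definition ind (b : bool) : R := if b then 1 else 0.

Lemma ind_bounds b : 0 <= ind b <= 1.
Proof. destruct b; simpl; lra. Qed.

Lemma ind_orb a b : ind (a || b) <= ind a + ind b.
Proof. destruct a, b; simpl; lra. Qed.

Definition expect (G : config -> R) (d : list (R * config)) : R :=
  fold_right (fun wc acc => fst wc * G (snd wc) + acc) 0 d.

Definition weights_nonneg (d : list (R * config)) : Prop :=
  List.Forall (fun wc => 0 <= fst wc) d.

Lemma mass_expect f d : mass f d = expect (fun c => ind (f c)) d.
Proof.
  induction d as [|[w c] d IH]; simpl; auto.
  rewrite IH; unfold ind; destruct (f c); ring.
Qed.

Lemma expect_app G d1 d2 : expect G (d1 ++ d2) = expect G d1 + expect G d2.
Proof. induction d1 as [|[w c] d IH]; simpl; [ring | rewrite IH; ring]. Qed.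

Lemma expect_plus G G' d :
  expect (fun c => G c + G' c) d = expect G d + expect G' d.
Proof. induction d as [|[w c] d IH]; simpl; [ring | rewrite IH; ring]. Qed.

Lemma expect_scal k G d : expect (fun c => k * G c) d = k * expect G d.
Proof. induction d as [|[w c] d IH]; simpl; [ring | rewrite IH; ring]. Qed.

Lemma expect_eq_in G G' d :
  (forall wc, In wc d -> G (snd wc) = G' (snd wc)) -> expect G d = expect G' d.
Proof.
  induction d as [|[w c] d IH]; simpl; intros HG; auto.
  f_equal; [f_equal; apply (HG (w, c)), in_eq | apply IH; auto].
Qed.

Lemma expect_zero_in G d : (forall wc, In wc d -> G (snd wc) = 0) -> expect G d = 0.
Proof.
  intros HG; rewrite (expect_eq_in G (fun _ => 0 * 1)) by (intros; rewrite HG; auto; ring).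
  rewrite expect_scal; ring.
Qed.

Lemma expect_nonneg G d : weights_nonneg d -> (forall c, 0 <= G c) -> 0 <= expect G d.
Proof.
  intros Hd HG; induction Hd as [|[w c] d Hw _ IH]; simpl in *; [lra|].
  specialize (HG c); nra.
Qed.

Lemma expect_le_in G G' d : weights_nonneg d ->
  (forall wc, In wc d -> G (snd wc) <= G' (snd wc)) -> expect G d <= expect G' d.
Proof.
  intros Hd; induction Hd as [|[w c] d Hw _ IH]; simpl in *; intros HG; [lra|].
  assert (G c <= G' c) by apply (HG (w, c)), in_eq.
  assert (expect G d <= expect G' d) by auto.
  nra.
Qed.

Lemma expect_le G G' d : weights_nonneg d -> (forall c, G c <= G' c) ->
  expect G d <= expect G' d.
Proof. intros; apply expect_le_in; auto. Qed.

Definition sumR (L : list nat) (F : nat -> R) : R :=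
  fold_right (fun i acc => F i + acc) 0 L.

Lemma sumR_app L1 L2 F : sumR (L1 ++ L2) F = sumR L1 F + sumR L2 F.
Proof. induction L1; simpl; [ring | rewrite IHL1; ring]. Qed.

Lemma sumR_plus L F F' : sumR L (fun i => F i + F' i) = sumR L F + sumR L F'.
Proof. induction L; simpl; [ring | rewrite IHL; ring]. Qed.

Lemma sumR_scal L k F : sumR L (fun i => k * F i) = k * sumR L F.
Proof. induction L; simpl; [ring | rewrite IHL; ring]. Qed.

Lemma sumR_const L k : sumR L (fun _ => k) = INR (length L) * k.
Proof. induction L; simpl length; rewrite ?S_INR; simpl; [ring | rewrite IHL; ring]. Qed.

Lemma sumR_eq_in L F F' : (forall i, In i L -> F i = F' i) -> sumR L F = sumR L F'.
Proof. induction L; simpl; intros HF; auto. rewrite HF, IHL; auto. Qed.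

Lemma sumR_le L F F' : (forall i, In i L -> F i <= F' i) -> sumR L F <= sumR L F'.
Proof.
  induction L; simpl; intros HF; [lra|].
  assert (F a <= F' a) by auto. assert (sumR L F <= sumR L F') by auto. lra.
Qed.

Lemma sumR_nonneg L F : (forall i, 0 <= F i) -> 0 <= sumR L F.
Proof. intros HF; induction L; simpl; [lra | specialize (HF a); lra]. Qed.

Lemma sumR_ge_term L F x : In x L -> (forall i, 0 <= F i) -> F x <= sumR L F.
Proof.
  intros Hx HF; induction L; simpl in *; [tauto|].
  destruct Hx as [<- | Hx].
  - pose proof (sumR_nonneg L F HF); lra.
  - specialize (IHL Hx); specialize (HF a); lra.
Qed.

Lemma sumR_ind_eqb L x : sumR L (fun i => ind (x =? i)) = INR (count_occ Nat.eq_dec L x).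
Proof.
  induction L as [|i L IH]; simpl; [auto|].
  destruct (Nat.eq_dec i x) as [<- | Hne].
  - rewrite Nat.eqb_refl, IH, S_INR; simpl; ring.
  - rewrite (proj2 (Nat.eqb_neq x i)) by auto. rewrite IH; simpl; ring.
Qed.

Lemma sumR_ind_exclusive L (F : nat -> bool) : NoDup L ->
  (forall i j, In i L -> In j L -> i <> j -> F i = true -> F j = false) ->
  sumR L (fun i => ind (F i)) <= 1.
Proof.
  intros HL; induction HL as [|x L HxL HL IH]; simpl; intros Hex; [lra|].
  destruct (F x) eqn:Fx; simpl.
  - rewrite (sumR_eq_in L _ (fun _ => 0 * 1)), sumR_scal; [lra|].
    intros j Hj; rewrite (Hex x j); simpl; auto; [ring|].
    intros ->; contradiction.
  - enough (sumR L (fun i => ind (F i)) <= 1) by lra.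
    apply IH; intros; apply (Hex i j); simpl; auto.
Qed.

Lemma expect_sumR L F d :
  expect (fun c => sumR L (fun i => F i c)) d = sumR L (fun i => expect (F i) d).
Proof.
  induction L; simpl.
  - rewrite (expect_zero_in _ d); auto.
  - rewrite expect_plus, IHL; auto.
Qed.

Lemma sumR_seq_blocks m K F :
  sumR (seq 1 (m * K)) F = sumR (seq 0 m) (fun b => sumR (seq (1 + b * K) K) F).
Proof.
  induction m as [|m IH]; [reflexivity|].
  rewrite Nat.mul_succ_l, seq_app, sumR_app, IH, seq_S, sumR_app; simpl; ring.
Qed.

Lemma sumR_pigeonhole m X t : (0 < m)%nat -> sumR (seq 0 m) X <= INR m * t ->
  exists b, (b < m)%nat /\ X b <= t.
Proof.
  induction m as [|m IH]; intros Hm Hsum; [lia|].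
  rewrite seq_S, sumR_app, S_INR in Hsum.
  replace (sumR [(0 + m)%nat] X) with (X m) in Hsum by (simpl; ring).
  destruct (Rle_dec (X m) t) as [Hle | Hgt]; [exists m; split; auto|].
  destruct m as [|m]; [simpl in Hsum; lra|].
  destruct (IH ltac:(lia) ltac:(lra)) as [b [Hb HXb]]; exists b; split; auto.
Qed.

Lemma bind_step_app P d1 d2 : bind_step P (d1 ++ d2) = bind_step P d1 ++ bind_step P d2.
Proof. apply flat_map_app. Qed.

Lemma run_app P k d1 d2 : run P k (d1 ++ d2) = run P k d1 ++ run P k d2.
Proof. revert d1 d2; induction k; intros; simpl; auto. rewrite bind_step_app; auto. Qed.

Lemma run_S P k d : run P (S k) d = bind_step P (run P k d).
Proof. revert d; induction k; intros; simpl; auto. rewrite <- IHk; reflexivity. Qed.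

Lemma run_nil P k : run P k [] = [].
Proof. induction k; simpl; auto. Qed.

Lemma expect_bind_step P G d :
  expect G (bind_step P d) = expect (fun c => expect G (step P c)) d.
Proof.
  induction d as [|[w c] d IH]; simpl; auto.
  unfold bind_step in *; simpl; rewrite expect_app, IH; f_equal.
  induction (step P c) as [|[w' c'] l IHl]; simpl; [ring | rewrite IHl; ring].
Qed.

Lemma expect_uniform G w (f : nat -> config) L :
  expect G (map (fun v => (w, f v)) L) = sumR L (fun v => w * G (f v)).
Proof. induction L; simpl; auto. rewrite IHL; auto. Qed.

Lemma step_weights_nonneg P c : weights_nonneg (step P c).
Proof.
  unfold step; destruct (nth_error P (pc c)) as [[] |];
    try (repeat constructor; simpl; lra).
  apply Forall_map, Forall_forall; intros; cbn [fst].
  left; apply Rinv_0_lt_compat, lt_0_INR; lia.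
Qed.

Lemma step_total_mass P c : expect (fun _ => 1) (step P c) = 1.
Proof.
  unfold step; destruct (nth_error P (pc c)) as [[] |]; try (simpl; ring).
  unfold exec; rewrite expect_uniform, sumR_const, length_seq.
  field; apply not_0_INR; lia.
Qed.

Lemma bind_step_weights_nonneg P d : weights_nonneg d -> weights_nonneg (bind_step P d).
Proof.
  intros Hd; apply Forall_forall; intros [w' c'] Hin.
  unfold bind_step in Hin; apply in_flat_map in Hin as [[w c] [Hwc Hin]].
  apply in_map_iff in Hin as [[v c''] [[= <- _] Hv]]; simpl.
  apply Rmult_le_pos.
  - exact (proj1 (Forall_forall _ d) Hd _ Hwc).
  - exact (proj1 (Forall_forall _ _) (step_weights_nonneg P c) _ Hv).
Qed.

Lemma run_weights_nonneg P k d : weights_nonneg d -> weights_nonneg (run P k d).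
Proof. revert d; induction k; intros; simpl; auto using bind_step_weights_nonneg. Qed.

Lemma singleton_weights_nonneg w c : 0 <= w -> weights_nonneg [(w, c)].
Proof. intros Hw; constructor; [exact Hw | constructor]. Qed.

Lemma init_weights_nonneg e : weights_nonneg (init e).
Proof. apply singleton_weights_nonneg; lra. Qed.

Lemma run_init_weights_nonneg P k e : weights_nonneg (run P k (init e)).
Proof. apply run_weights_nonneg, init_weights_nonneg. Qed.

Lemma run_total_mass P k d : expect (fun _ => 1) (run P k d) = expect (fun _ => 1) d.
Proof.
  revert d; induction k; intros; simpl; auto.
  rewrite IHk, expect_bind_step.
  apply expect_eq_in; intros; apply step_total_mass.
Qed.

Lemma expect_run_le1 P k e G : (forall c, 0 <= G c <= 1) ->
  0 <= expect G (run P k (init e)) <= 1.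
Proof.
  intros HG; split.
  - apply expect_nonneg; [apply run_init_weights_nonneg | apply HG].
  - apply Rle_trans with (expect (fun _ => 1) (run P k (init e))).
    + apply expect_le; [apply run_init_weights_nonneg | apply HG].
    + rewrite run_total_mass; simpl; lra.
Qed.

Lemma halted_step P c : halted P c = true -> step P c = [(1, c)].
Proof.
  unfold halted, step; intros H; apply Nat.leb_le in H.
  rewrite (proj2 (nth_error_None P (pc c)) H); auto.
Qed.

Lemma step_steps P c : halted P c = false ->
  forall wc, In wc (step P c) -> steps (snd wc) = S (steps c).
Proof.
  unfold halted, step; intros H wc Hwc; apply Nat.leb_gt in H.
  destruct (nth_error P (pc c)) as [i|] eqn:E.
  2:{ apply nth_error_None in E; lia. }
  destruct i; try (destruct Hwc as [<- | []]; reflexivity).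
  apply in_map_iff in Hwc as [v [<- _]]; reflexivity.
Qed.

Lemma Forall_bind_step P (Q : R * config -> Prop) d :
  (forall wc, In wc d -> forall wc', In wc' (step P (snd wc)) -> Q (fst wc * fst wc', snd wc')) ->
  List.Forall Q (bind_step P d).
Proof.
  intros H; apply Forall_forall; intros y Hy.
  apply in_flat_map in Hy as [wc [Hwc Hy]].
  apply in_map_iff in Hy as [wc' [<- Hwc']]; auto.
Qed.

Lemma run_invariant P (Q : config -> Prop) k d :
  (forall c wc, Q c -> In wc (step P c) -> Q (snd wc)) ->
  List.Forall (fun wc => Q (snd wc)) d -> List.Forall (fun wc => Q (snd wc)) (run P k d).
Proof.
  intros HQ; revert d; induction k; intros d Hd; simpl; auto.
  apply IHk, Forall_bind_step; intros wc Hwc wc' Hwc'.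
  apply (HQ (snd wc) wc'); auto; exact (proj1 (Forall_forall _ d) Hd _ Hwc).
Qed.

(* Halted configurations are fixed points of [step], so the mass of any
   quantity supported on halted configurations can only grow. *)
Lemma expect_halted_run_mono P h d k k' : weights_nonneg d -> (forall c, 0 <= h c) ->
  (forall c, halted P c = false -> h c = 0) -> (k <= k')%nat ->
  expect h (run P k d) <= expect h (run P k' d).
Proof.
  intros Hd Hh Hh0 Hk; induction Hk as [|k' _ IH]; [lra|].
  apply (Rle_trans _ _ _ IH); rewrite run_S, expect_bind_step.
  apply expect_le; [apply run_weights_nonneg; auto|]; intros c.
  destruct (halted P c) eqn:E.
  - rewrite halted_step; auto; simpl; lra.
  - rewrite Hh0; auto; apply expect_nonneg; auto using step_weights_nonneg.
Qed.

Lemma run_steps_bound P e k : List.Forall (fun wc => (steps (snd wc) <= k)%nat /\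
   (halted P (snd wc) = false -> steps (snd wc) = k)) (run P k (init e)).
Proof.
  induction k.
  - repeat constructor.
  - rewrite run_S; apply Forall_bind_step; intros wc Hwc wc' Hwc'; simpl.
    destruct (proj1 (Forall_forall _ _) IHk wc Hwc) as [Hle Hrun].
    destruct (halted P (snd wc)) eqn:Eh.
    + rewrite halted_step in Hwc' by auto; destruct Hwc' as [<- | []]; simpl.
      rewrite Eh; split; [lia | discriminate].
    + rewrite (step_steps P (snd wc) Eh wc' Hwc'); split; intros; lia.
Qed.

(** * Halting mass and output probabilities *)

Definition halt_mass (P : program) (e : nat -> nat) (k : nat) : R :=
  expect (fun c => ind (halted P c)) (run P k (init e)).

Definition halts_at (P : program) (t : nat) (c : config) : R :=
  ind (halted P c && (steps c =? t)).

(* Once [t] steps have been simulated, no further configuration can halt at time [t]. *)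
Lemma expect_halts_at_run P e t k : (t <= k)%nat ->
  expect (halts_at P t) (run P k (init e)) = PrTime P e t.
Proof.
  intros Htk; unfold PrTime; rewrite mass_expect; fold (halts_at P t).
  induction Htk as [|k Htk IH]; auto.
  rewrite <- IH, run_S, expect_bind_step; apply expect_eq_in; intros wc Hwc.
  destruct (proj1 (Forall_forall _ _) (run_steps_bound P e k) wc Hwc) as [_ Hk].
  destruct (halted P (snd wc)) eqn:Eh.
  - rewrite halted_step by auto; simpl; ring.
  - unfold halts_at at 2; rewrite Eh; apply expect_zero_in; intros wc' Hwc'.
    unfold halts_at; rewrite (step_steps P _ Eh wc' Hwc'), Hk by auto.
    rewrite (proj2 (Nat.eqb_neq _ _)) by lia; rewrite andb_false_r; reflexivity.
Qed.

Lemma halt_mass_sum_PrTime P e k :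
  halt_mass P e k = sumR (seq 0 (S k)) (fun t => PrTime P e t).
Proof.
  unfold halt_mass.
  rewrite (expect_eq_in _ (fun c => sumR (seq 0 (S k)) (fun t => halts_at P t c))).
  - rewrite expect_sumR; apply sumR_eq_in; intros t Ht.
    apply in_seq in Ht; apply expect_halts_at_run; lia.
  - intros wc Hwc; unfold halts_at.
    destruct (proj1 (Forall_forall _ _) (run_steps_bound P e k) wc Hwc) as [Hk _].
    destruct (halted P (snd wc)); cbn [andb].
    + rewrite sumR_ind_eqb.
      enough (count_occ Nat.eq_dec (seq 0 (S k)) (steps (snd wc)) = 1%nat) as -> by reflexivity.
      assert (Hin : In (steps (snd wc)) (seq 0 (S k))) by (apply in_seq; lia).
      apply (count_occ_In Nat.eq_dec) in Hin.
      pose proof (proj1 (NoDup_count_occ Nat.eq_dec _) (seq_NoDup (S k) 0) (steps (snd wc))).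
      lia.
    + rewrite (sumR_eq_in _ _ (fun _ => 0 * 1)) by (intros; simpl; ring).
      rewrite sumR_scal; simpl; ring.
Qed.

Lemma halt_mass_mono P e k k' : (k <= k')%nat -> halt_mass P e k <= halt_mass P e k'.
Proof.
  intros; apply expect_halted_run_mono; auto using init_weights_nonneg.
  - intros; apply ind_bounds.
  - intros c ->; reflexivity.
Qed.

Lemma halt_mass_settles P e g : 0 < g ->
  exists T, forall k, halt_mass P e k <= halt_mass P e T + g.
Proof.
  intros Hg.
  assert (Hincr : forall k, halt_mass P e k <= halt_mass P e (S k)).
  { intros; apply halt_mass_mono; lia. }
  destruct (ex_finite_lim_seq_incr (halt_mass P e) 1 Hincr) as [l Hl].
  { intros; apply expect_run_le1; intros; apply ind_bounds. }
  pose proof (is_lim_seq_incr_compare _ _ Hl Hincr) as Hle.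
  apply is_lim_seq_spec in Hl; destruct (Hl (mkposreal g Hg)) as [T HT].
  exists T; intros k.
  specialize (HT T (le_n T)); specialize (Hle k); simpl in HT.
  apply Rabs_def2 in HT; lra.
Qed.

Definition halts_in (P : program) (E : list nat -> bool) (c : config) : R :=
  ind (halted P c && E (output c)).

Lemma PrOutBy_expect P e k E : PrOutBy P e k E = expect (halts_in P E) (run P k (init e)).
Proof. apply mass_expect. Qed.

Lemma PrOutBy_bounds P e k E : 0 <= PrOutBy P e k E <= 1.
Proof. rewrite PrOutBy_expect; apply expect_run_le1; intros; apply ind_bounds. Qed.

Lemma PrOutBy_mono P e k k' E : (k <= k')%nat -> PrOutBy P e k E <= PrOutBy P e k' E.
Proof.
  intros; rewrite !PrOutBy_expect; apply expect_halted_run_mono; auto using init_weights_nonneg.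
  - intros; apply ind_bounds.
  - intros c Hc; unfold halts_in; rewrite Hc; reflexivity.
Qed.

(* Whatever halts between times [T] and [k] contributes to the halting mass. *)
Lemma PrOutBy_growth_le P e E T k : (T <= k)%nat ->
  PrOutBy P e k E - PrOutBy P e T E <= halt_mass P e k - halt_mass P e T.
Proof.
  intros HTk; rewrite !PrOutBy_expect; unfold halt_mass.
  set (Gn := fun c => ind (halted P c && negb (E (output c)))).
  assert (Hsplit : forall k, expect (fun c => ind (halted P c)) (run P k (init e)) =
     expect (halts_in P E) (run P k (init e)) + expect Gn (run P k (init e))).
  { intros k0; rewrite <- expect_plus; apply expect_eq_in; intros wc _.
    unfold halts_in, Gn; destruct (halted P (snd wc)), (E (output (snd wc))); simpl; ring. }
  rewrite !Hsplit.
  enough (expect Gn (run P T (init e)) <= expect Gn (run P k (init e))) by lra.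
  apply expect_halted_run_mono; auto using init_weights_nonneg.
  - intros; apply ind_bounds.
  - intros c Hc; unfold Gn; rewrite Hc; reflexivity.
Qed.

Lemma is_lim_seq_PrOut P e E : is_lim_seq (fun k => PrOutBy P e k E) (PrOut P e E).
Proof.
  destruct (ex_finite_lim_seq_incr (fun k => PrOutBy P e k E) 1) as [l Hl].
  - intros; apply PrOutBy_mono; lia.
  - intros; apply PrOutBy_bounds.
  - unfold PrOut; rewrite (is_lim_seq_unique _ _ Hl); exact Hl.
Qed.

Lemma PrOutBy_le_PrOut P e k E : PrOutBy P e k E <= PrOut P e E.
Proof.
  apply (is_lim_seq_incr_compare (fun k => PrOutBy P e k E)).
  - apply is_lim_seq_PrOut.
  - intros; apply PrOutBy_mono; lia.
Qed.

Lemma PrOut_nonneg P e E : 0 <= PrOut P e E.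
Proof. pose proof (PrOutBy_le_PrOut P e 0 E); pose proof (PrOutBy_bounds P e 0 E); lra. Qed.

Lemma PrOut_le_PrOutBy_add P e E T g :
  (forall k, halt_mass P e k <= halt_mass P e T + g) ->
  PrOut P e E <= PrOutBy P e T E + g.
Proof.
  intros HT.
  assert (Hle : Rbar_le (PrOut P e E) (PrOutBy P e T E + g)).
  { apply (is_lim_seq_le (fun k => PrOutBy P e k E) (fun _ => PrOutBy P e T E + g));
      [| apply is_lim_seq_PrOut |
      apply is_lim_seq_const].
    intros k; destruct (le_lt_dec T k) as [HTk | HkT].
    - pose proof (PrOutBy_growth_le P e E T k HTk); specialize (HT k); lra.
    - pose proof (PrOutBy_mono P e k T E ltac:(lia)); specialize (HT T); lra. }
  exact Hle.
Qed.

(** * Coupling runs on inputs that differ in a few cells *)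

Definition reads_of (i : instr) (m : nat -> nat) : list nat :=
  match i with
  | IConst _ _ => []
  | IAdd _ a b | ISub _ a b | IMul _ a b | IDiv _ a b | IMod _ a b
  | ILt _ a b | IEq _ a b | IAnd _ a b | IOr _ a b => [a; b]
  | INot _ a | IJz a _ | IRand _ a => [a]
  | ILoad _ a => [a; m a]
  | IStore a s => [a; s]
  end.

Definition cells_read (P : program) (c : config) : list nat :=
  match nth_error P (pc c) with None => [] | Some i => reads_of i (mem c) end.

Lemma cells_read_length P c : (length (cells_read P c) <= 2)%nat.
Proof. unfold cells_read; destruct (nth_error P (pc c)) as [[] |]; simpl; lia. Qed.

Definition agree_except (s : nat -> bool) (c c' : config) : Prop :=
  pc c = pc c' /\ steps c = steps c' /\
  forall j, mem c j = mem c' j \/ (s j = true /\ mem c j = 0%nat /\ mem c' j = 1%nat).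

Definition agree_weighted (s : nat -> bool) (wc wc' : R * config) : Prop :=
  fst wc = fst wc' /\ agree_except s (snd wc) (snd wc').

Lemma step_agree P s c c' : agree_except s c c' -> existsb s (cells_read P c) = false ->
  Forall2 (agree_weighted s) (step P c) (step P c').
Proof.
  destruct c as [p m t], c' as [p' m' t']; intros [Hp [Ht Hm]] Hread.
  simpl in Hp, Ht, Hm; subst p' t'.
  assert (Hone : forall w x y, agree_except s x y -> Forall2 (agree_weighted s) [(w, x)] [(w, y)]).
  { intros w x y Hxy; constructor; [split; auto | constructor]. }
  assert (Hkeep : forall q t', agree_except s (Config q m t') (Config q m' t')).
  { intros q t'; repeat split; auto. }
  assert (Hupd : forall q d v,
            agree_except s (Config q (upd m d v) (S t)) (Config q (upd m' d v) (S t))).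
  { intros q d v; repeat split; intros j; unfold upd; simpl; destruct (j =? d); auto. }
  unfold step, cells_read in *; simpl in *.
  destruct (nth_error P p) as [i|]; [| apply Hone, Hkeep].
  assert (Hsame : forall j, In j (reads_of i m) -> m j = m' j).
  { intros j Hj; destruct (Hm j) as [| [Hsj _]]; auto.
    rewrite (proj2 (existsb_exists _ _) (ex_intro _ j (conj Hj Hsj))) in Hread; discriminate. }
  destruct i; cbn [reads_of exec mem pc steps] in Hsame |- *;
    repeat match goal with
    | |- context [m (m ?j)] => rewrite (Hsame (m j)) by (simpl; auto)
    | |- context [m ?j] => rewrite (Hsame j) by (simpl; auto)
    end;
    try (apply Hone; first [apply Hupd | apply Hkeep]).
  match goal with |- context [seq 0 ?n] => induction (seq 0 n) end;
    constructor; auto; split; [reflexivity | apply Hupd].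
Qed.

Fixpoint cumul_expect (P : program) (G : config -> R) (k : nat)
    (d : list (R * config)) : R :=
  match k with
  | O => 0
  | S k' => expect G d + cumul_expect P G k' (bind_step P d)
  end.

Lemma cumul_expect_nil P G k : cumul_expect P G k [] = 0.
Proof. induction k; simpl; auto; rewrite IHk; ring. Qed.

Lemma cumul_expect_app P G k d1 d2 :
  cumul_expect P G k (d1 ++ d2) = cumul_expect P G k d1 + cumul_expect P G k d2.
Proof.
  revert d1 d2; induction k; intros; simpl; [ring|].
  rewrite bind_step_app, expect_app, IHk; ring.
Qed.

Lemma cumul_expect_le P G G' k d : weights_nonneg d -> (forall c, G c <= G' c) ->
  cumul_expect P G k d <= cumul_expect P G' k d.
Proof.
  revert d; induction k; intros d Hd HG; simpl; [lra|].
  pose proof (expect_le G G' d Hd HG).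
  pose proof (IHk (bind_step P d) (bind_step_weights_nonneg P d Hd) HG); lra.
Qed.

Lemma cumul_expect_nonneg P G k d : weights_nonneg d -> (forall c, 0 <= G c) ->
  0 <= cumul_expect P G k d.
Proof.
  intros Hd HG; replace 0 with (cumul_expect P (fun _ => 0) k d).
  - apply cumul_expect_le; auto.
  - clear; revert d; induction k; intros; simpl; auto.
    rewrite IHk, expect_zero_in; auto; ring.
Qed.

Lemma cumul_expect_sumR P L F k d :
  cumul_expect P (fun c => sumR L (fun i => F i c)) k d
  = sumR L (fun i => cumul_expect P (F i) k d).
Proof.
  revert d; induction k; intros d; simpl.
  - rewrite sumR_const; ring.
  - rewrite expect_sumR, IHk, <- sumR_plus; reflexivity.
Qed.

Lemma cumul_expect_const P b k d :
  cumul_expect P (fun _ => b) k d = INR k * b * expect (fun _ => 1) d.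
Proof.
  revert d; induction k; intros d; simpl; [ring|].
  rewrite IHk, expect_bind_step.
  rewrite (expect_eq_in (fun c => expect (fun _ => 1) (step P c)) (fun _ => 1))
    by (intros; apply step_total_mass).
  rewrite (expect_eq_in (fun _ => b) (fun _ => b * 1)), expect_scal by (intros; ring).
  destruct k; simpl; ring.
Qed.

Section Coupling.

Variables (P : program) (s : nat -> bool) (F G M : config -> R).
Hypothesis F_bounds : forall c, 0 <= F c <= 1.
Hypothesis G_nonneg : forall c, 0 <= G c.
Hypothesis M_nonneg : forall c, 0 <= M c.
Hypothesis F_le_G_M : forall c c', agree_except s c c' -> F c' <= G c + M c'.

Definition coupling_bound (k : nat) (d d' : list (R * config)) : Prop :=
  expect F (run P k d') <=
    expect G (run P k d) + cumul_expect P (fun c => ind (existsb s (cells_read P c))) k d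
    + expect M (run P k d').

Lemma coupling_bound_lift k :
  (forall w c c', 0 <= w -> agree_except s c c' -> coupling_bound k [(w, c)] [(w, c')]) ->
  forall d d', Forall2 (agree_weighted s) d d' -> weights_nonneg d -> coupling_bound k d d'.
Proof.
  intros Hpair d d' Hdd'.
  induction Hdd' as [| [w c] [w' c'] d d' [Hw Hc] _ IH]; intros Hd; unfold coupling_bound.
  - rewrite run_nil, cumul_expect_nil; simpl; lra.
  - simpl in Hw, Hc; subst w'; inversion Hd as [| ? ? Hw Hd']; subst.
    change ((w, c) :: d) with ([(w, c)] ++ d); change ((w, c') :: d') with ([(w, c')] ++ d').
    rewrite !run_app, !expect_app, cumul_expect_app.
    specialize (Hpair w c c' Hw Hc); specialize (IH Hd'); unfold coupling_bound in *; lra.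
Qed.

(* A pair of configurations either reads a marked cell now, which is paid for by
   the expected number of marked reads, or steps to pairs that still agree. *)
Lemma coupling k d d' : Forall2 (agree_weighted s) d d' -> weights_nonneg d ->
  coupling_bound k d d'.
Proof.
  revert d d'; induction k as [|k IH]; apply coupling_bound_lift; intros w c c' Hw Hc;
    unfold coupling_bound.
  - simpl; specialize (F_le_G_M c c' Hc); nra.
  - assert (Hnn : forall c0, weights_nonneg (run P k (bind_step P [(w, c0)]))).
    { intros; apply run_weights_nonneg, bind_step_weights_nonneg, singleton_weights_nonneg, Hw. }
    cbn [run cumul_expect].
    replace (expect (fun c0 => ind (existsb s (cells_read P c0))) [(w, c)])
      with (w * ind (existsb s (cells_read P c))) by (simpl; ring).
    destruct (existsb s (cells_read P c)) eqn:Hread; cbn [ind].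
    + assert (expect F (run P k (bind_step P [(w, c')])) <= w).
      { apply Rle_trans with (expect (fun _ => 1) (run P k (bind_step P [(w, c')]))).
        - apply expect_le; auto; apply F_bounds.
        - rewrite run_total_mass, expect_bind_step; simpl; rewrite step_total_mass; lra. }
      pose proof (expect_nonneg G _ (Hnn c) G_nonneg).
      pose proof (expect_nonneg M _ (Hnn c') M_nonneg).
      pose proof (cumul_expect_nonneg P (fun c0 => ind (existsb s (cells_read P c0))) k
                    (bind_step P [(w, c)])
                    (bind_step_weights_nonneg _ _ (singleton_weights_nonneg _ _ Hw))
                    (fun c0 => proj1 (ind_bounds _))).
      lra.
    + assert (Hstep : Forall2 (agree_weighted s) (bind_step P [(w, c)]) (bind_step P [(w, c')])).
      { unfold bind_step; simpl; rewrite !app_nil_r.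
        induction (step_agree P s c c' Hc Hread) as [| [v e] [v' e'] l l' [Hv He] _ IHl];
          simpl in *; constructor; auto; split; simpl; congruence. }
      specialize (IH _ _ Hstep (bind_step_weights_nonneg _ _ (singleton_weights_nonneg _ _ Hw))).
      unfold coupling_bound in IH; lra.
Qed.

End Coupling.

Definition marks (L : list nat) (j : nat) : bool := existsb (Nat.eqb j) L.

Lemma marks_spec L j : marks L j = true <-> In j L.
Proof.
  unfold marks; rewrite existsb_exists; split.
  - intros [x [Hx E]]; apply Nat.eqb_eq in E; subst; auto.
  - intros H; exists j; split; auto; apply Nat.eqb_refl.
Qed.

Lemma ind_existsb_marks_le L r :
  ind (existsb (marks L) r) <= sumR L (fun i => ind (existsb (Nat.eqb i) r)).
Proof.
  destruct (existsb (marks L) r) eqn:E.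
  - apply existsb_exists in E as [y [Hy Hs]]; apply marks_spec in Hs.
    apply Rle_trans with (ind (existsb (Nat.eqb y) r)).
    + rewrite (proj2 (existsb_exists _ _)); [simpl; lra|].
      exists y; split; auto; apply Nat.eqb_refl.
    + apply (sumR_ge_term L (fun i => ind (existsb (Nat.eqb i) r))); auto.
      intros; apply ind_bounds.
  - apply sumR_nonneg; intros; apply ind_bounds.
Qed.

Lemma sumR_ind_existsb_le L r : NoDup L ->
  sumR L (fun i => ind (existsb (Nat.eqb i) r)) <= INR (length r).
Proof.
  intros HL; induction r as [|x r IH]; cbn [existsb length].
  - rewrite (sumR_eq_in _ _ (fun _ => 0 * 1)), sumR_scal by (intros; simpl; ring); simpl; lra.
  - rewrite S_INR.
    apply Rle_trans with (sumR L (fun i => ind (x =? i) + ind (existsb (Nat.eqb i) r))).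
    + apply sumR_le; intros; rewrite Nat.eqb_sym; apply ind_orb.
    + rewrite sumR_plus, sumR_ind_eqb.
      pose proof (proj1 (NoDup_count_occ Nat.eq_dec L) HL x) as Hx.
      apply le_INR in Hx; simpl in Hx; lra.
Qed.

Definition reads_cell (P : program) (i : nat) (c : config) : R :=
  ind (existsb (Nat.eqb i) (cells_read P c)).

Lemma sumR_reads_cell_le P n k d : weights_nonneg d ->
  sumR (seq 1 n) (fun i => cumul_expect P (reads_cell P i) k d)
  <= 2 * INR k * expect (fun _ => 1) d.
Proof.
  intros Hd; rewrite <- cumul_expect_sumR.
  apply Rle_trans with (cumul_expect P (fun _ => 2) k d).
  - apply cumul_expect_le; auto; intros c.
    apply Rle_trans with (INR (length (cells_read P c))).
    + apply sumR_ind_existsb_le, seq_NoDup.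
    + pose proof (le_INR _ _ (cells_read_length P c)); simpl in *; lra.
  - rewrite cumul_expect_const; lra.
Qed.

Definition nonzero_cells (n : nat) (m : nat -> nat) : R :=
  sumR (seq 1 n) (fun i => ind (negb (m i =? 0))).

Lemma nonzero_cells_upd n m d v : nonzero_cells n (upd m d v) <= nonzero_cells n m + 1.
Proof.
  unfold nonzero_cells.
  apply Rle_trans with (sumR (seq 1 n) (fun i => ind (negb (m i =? 0)) + ind (d =? i))).
  - apply sumR_le; intros i _; unfold upd.
    pose proof (ind_bounds (negb (m i =? 0))).
    destruct (Nat.eqb_spec i d) as [-> | Hne].
    + rewrite Nat.eqb_refl; pose proof (ind_bounds (negb (v =? 0))); simpl; lra.
    + rewrite (proj2 (Nat.eqb_neq d i)) by auto; simpl; lra.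
  - rewrite sumR_plus, sumR_ind_eqb.
    pose proof (proj1 (NoDup_count_occ Nat.eq_dec _) (seq_NoDup n 1) d) as Hd.
    apply le_INR in Hd; simpl in Hd; lra.
Qed.

(* Each instruction writes at most one cell. *)
Lemma nonzero_cells_step P n c wc : nonzero_cells n (mem c) <= INR (steps c) ->
  In wc (step P c) -> nonzero_cells n (mem (snd wc)) <= INR (steps (snd wc)).
Proof.
  intros Hc Hwc; unfold step in Hwc.
  destruct (nth_error P (pc c)) as [i|]; [| destruct Hwc as [<- | []]; auto].
  destruct i; unfold exec in Hwc;
    try (apply in_map_iff in Hwc as [? [<- _]]);
    try (destruct Hwc as [<- | []]);
    cbn [snd mem steps wr]; rewrite S_INR;
    match goal with
    | |- nonzero_cells n (upd _ ?d ?v) <= _ => pose proof (nonzero_cells_upd n (mem c) d v)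
    | _ => idtac
    end; lra.
Qed.

Definition out_nonzero (i : nat) (y : list nat) : bool :=
  negb (nth (pred i) y 0%nat =? 0).

Lemma nth_output c k :
  nth k (output c) 0%nat = if k <? mem c 0 then mem c (S k) else 0%nat.
Proof.
  unfold output; destruct (Nat.ltb_spec k (mem c 0)).
  - rewrite nth_indep with (d' := mem c 1) by (rewrite length_map, length_seq; auto).
    rewrite (map_nth (fun i => mem c (S i))), seq_nth; auto.
  - apply nth_overflow; rewrite length_map, length_seq; auto.
Qed.

Lemma halts_in_out_nonzero_le P c i : (1 <= i)%nat ->
  halts_in P (out_nonzero i) c <= ind (negb (mem c i =? 0)).
Proof.
  intros Hi; unfold halts_in, out_nonzero; rewrite nth_output.
  replace (S (pred i)) with i by lia.
  destruct (pred i <? mem c 0), (halted P c); simpl; try apply ind_bounds; simpl; lra.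
Qed.

Definition outputs_marked (L : list nat) (c : config) : bool :=
  existsb (fun i => negb (mem c i =? 0) && (i <=? mem c 0)) L.

Lemma output_agree L c c' : agree_except (marks L) c c' -> (forall i, In i L -> (1 <= i)%nat) ->
  outputs_marked L c' = false -> output c = output c'.
Proof.
  intros [_ [_ Hm]] HL Hout.
  assert (E0 : mem c 0 = mem c' 0).
  { destruct (Hm 0%nat) as [| [Hs _]]; auto; apply marks_spec, HL in Hs; lia. }
  unfold output; rewrite E0; apply map_ext_in; intros i Hi; apply in_seq in Hi.
  destruct (Hm (S i)) as [| [Hs [_ H1]]]; auto.
  apply marks_spec in Hs.
  assert (Hmarked : outputs_marked L c' = true).
  { apply existsb_exists; exists (S i); split; auto.
    rewrite H1; apply Nat.leb_le; lia. }
  congruence.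
Qed.

Lemma halts_outputs_marked_le P L c : (forall i, In i L -> (1 <= i)%nat) ->
  ind (halted P c && outputs_marked L c) <= sumR L (fun i => halts_in P (out_nonzero i) c).
Proof.
  intros HL; destruct (halted P c) eqn:Eh, (outputs_marked L c) eqn:Em; simpl;
    try (apply sumR_nonneg; intros; apply ind_bounds).
  apply existsb_exists in Em as [i [Hi Hc]]; apply andb_true_iff in Hc as [H1 H2].
  apply Nat.leb_le in H2.
  apply Rle_trans with (halts_in P (out_nonzero i) c).
  - unfold halts_in, out_nonzero; rewrite Eh, nth_output; specialize (HL i Hi).
    rewrite (proj2 (Nat.ltb_lt (pred i) (mem c 0))) by lia.
    replace (S (pred i)) with i by lia; rewrite H1; simpl; lra.
  - apply (sumR_ge_term L (fun i => halts_in P (out_nonzero i) c)); auto.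
    intros; apply ind_bounds.
Qed.

Lemma halts_in_agree_le P L E c c' : agree_except (marks L) c c' ->
  (forall i, In i L -> (1 <= i)%nat) ->
  halts_in P E c' <= halts_in P E c + ind (halted P c' && outputs_marked L c').
Proof.
  intros Hc HL; pose proof Hc as [Hp _].
  destruct (outputs_marked L c') eqn:Em.
  - pose proof (ind_bounds (halted P c && E (output c))).
    pose proof (ind_bounds (E (output c'))).
    unfold halts_in; destruct (halted P c'); cbn [andb ind]; lra.
  - rewrite andb_false_r; unfold halts_in, halted.
    rewrite Hp, (output_agree L c c' Hc HL Em); simpl; lra.
Qed.

(** * Datasets and group privacy *)

Definition env_of (x : list bool) : nat -> nat :=
  fun i => match i with O => length x | S i' => b2n (nth i' x false) end.

Lemma env_of_compatible x : compatible x (env_of x).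
Proof. split; auto. Qed.

Lemma nth_repeat_false n i : nth i (repeat false n) false = false.
Proof. revert i; induction n; intros [|i]; simpl; auto. Qed.

Lemma nonzero_cells_env_zeros n : nonzero_cells n (env_of (repeat false n)) = 0.
Proof.
  unfold nonzero_cells; rewrite (sumR_eq_in _ _ (fun _ => 0 * 1)), sumR_scal; [ring|].
  intros i Hi; apply in_seq in Hi; destruct i as [|i]; [lia|].
  simpl; rewrite nth_repeat_false; simpl; ring.
Qed.

(* On the all-zero input every nonzero output entry had to be written by some step. *)
Lemma sumR_PrOutBy_out_nonzero_le P n T :
  sumR (seq 1 n) (fun i => PrOutBy P (env_of (repeat false n)) T (out_nonzero i)) <= INR T.
Proof.
  set (d := run P T (init (env_of (repeat false n)))).
  rewrite (sumR_eq_in _ _ (fun i => expect (halts_in P (out_nonzero i)) d))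
    by (intros; apply PrOutBy_expect).
  rewrite <- expect_sumR.
  assert (Hinv : List.Forall (fun wc => nonzero_cells n (mem (snd wc)) <= INR (steps (snd wc))) d).
  { apply (run_invariant P (fun c => nonzero_cells n (mem c) <= INR (steps c)));
      [intros; eapply nonzero_cells_step; eauto|].
    constructor; [| constructor]; simpl; rewrite nonzero_cells_env_zeros; lra. }
  apply Rle_trans with (expect (fun _ => INR T * 1) d).
  - apply expect_le_in; [apply run_init_weights_nonneg|]; intros wc Hwc.
    pose proof (proj1 (Forall_forall _ _) Hinv wc Hwc).
    destruct (proj1 (Forall_forall _ _) (run_steps_bound P _ T) wc Hwc) as [HT _].
    apply le_INR in HT.
    enough (sumR (seq 1 n) (fun i => halts_in P (out_nonzero i) (snd wc))
            <= nonzero_cells n (mem (snd wc))) by lra.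
    apply sumR_le; intros i Hi; apply in_seq in Hi; apply halts_in_out_nonzero_le; lia.
  - unfold d; rewrite expect_scal, run_total_mass; simpl; lra.
Qed.

Definition block_data (a j z : nat) : list bool :=
  repeat false a ++ repeat true j ++ repeat false z.

Lemma block_data_length a j z : length (block_data a j z) = (a + j + z)%nat.
Proof. unfold block_data; rewrite !length_app, !repeat_length; lia. Qed.

Lemma nth_block_data_true a j z i :
  nth i (block_data a j z) false = true -> (a <= i < a + j)%nat.
Proof.
  unfold block_data; intros H; destruct (Nat.ltb_spec i a).
  - rewrite app_nth1, nth_repeat_false in H by (rewrite repeat_length; auto); discriminate.
  - rewrite app_nth2, repeat_length in H by (rewrite repeat_length; auto).
    destruct (Nat.ltb_spec (i - a) j); [lia|].
    rewrite app_nth2, nth_repeat_false in H by (rewrite repeat_length; auto); discriminate.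
Qed.

Lemma mean_block_data a j z : mean (block_data a j z) = INR j / INR (a + j + z).
Proof.
  assert (Hsum : forall l1 l2, fold_right (fun b acc => INR (b2n b) + acc) 0 (l1 ++ l2) =
    fold_right (fun b acc => INR (b2n b) + acc) 0 l1
    + fold_right (fun b acc => INR (b2n b) + acc) 0 l2).
  { induction l1; intros; simpl; [ring | rewrite IHl1; ring]. }
  assert (Hrep : forall b n, fold_right (fun b acc => INR (b2n b) + acc) 0 (repeat b n)
                             = INR n * INR (b2n b)).
  { induction n; simpl repeat; cbn [fold_right]; [simpl; ring | rewrite IHn, S_INR; ring]. }
  unfold mean; rewrite block_data_length; unfold block_data; rewrite !Hsum, !Hrep.
  simpl b2n; rewrite INR_0, INR_1; unfold Rdiv; ring.
Qed.

Lemma agree_except_init a j z :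
  agree_except (marks (seq (a + 1) j)) (Config 0 (env_of (repeat false (a + j + z))) 0)
    (Config 0 (env_of (block_data a j z)) 0).
Proof.
  split; [reflexivity | split; [reflexivity|]]; intros [|i]; simpl.
  - left; rewrite repeat_length, block_data_length; auto.
  - rewrite nth_repeat_false; destruct (nth i (block_data a j z) false) eqn:E; [right | left; auto].
    apply nth_block_data_true in E; split; [apply marks_spec, in_seq; lia | auto].
Qed.

(* The coupling of the runs on [block_data a j z] and on the all-zero input of the
   same length: they can only separate when the run on zeros reads one of the cells
   [a+1 .. a+j], or when the output exposes one of these cells. *)
Lemma PrOutBy_block_data_le P a j z T E :
  let e0 := env_of (repeat false (a + j + z)) in
  let e1 := env_of (block_data a j z) in
  let L := seq (a + 1) j in
  PrOutBy P e1 T E <= PrOutBy P e0 T E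
    + sumR L (fun i => cumul_expect P (reads_cell P i) T (init e0))
    + sumR L (fun i => PrOutBy P e1 T (out_nonzero i)).
Proof.
  intros e0 e1 L.
  assert (HL : forall i, In i L -> (1 <= i)%nat) by (intros i Hi; apply in_seq in Hi; lia).
  pose proof (coupling P (marks L) (halts_in P E) (halts_in P E)
    (fun c => ind (halted P c && outputs_marked L c))
    (fun c => ind_bounds _) (fun c => proj1 (ind_bounds _)) (fun c => proj1 (ind_bounds _))
    (fun c c' Hc => halts_in_agree_le P L E c c' Hc HL) T (init e0) (init e1)) as Hc.
  unfold coupling_bound in Hc; rewrite <- !PrOutBy_expect in Hc.
  specialize (Hc ltac:(constructor; [split; [reflexivity | apply agree_except_init] | constructor])
                (init_weights_nonneg e0)).
  assert (Hreads : cumul_expect P (fun c => ind (existsb (marks L) (cells_read P c))) T (init e0)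
                   <= sumR L (fun i => cumul_expect P (reads_cell P i) T (init e0))).
  { rewrite <- cumul_expect_sumR; apply cumul_expect_le; [apply init_weights_nonneg|].
    intros c; apply ind_existsb_marks_le. }
  assert (Hexposed : expect (fun c => ind (halted P c && outputs_marked L c)) (run P T (init e1))
                     <= sumR L (fun i => PrOutBy P e1 T (out_nonzero i))).
  { rewrite (sumR_eq_in _ _ (fun i => expect (halts_in P (out_nonzero i)) (run P T (init e1))))
      by (intros; apply PrOutBy_expect).
    rewrite <- expect_sumR; apply expect_le; [apply run_init_weights_nonneg|].
    intros c; apply halts_outputs_marked_le, HL. }
  lra.
Qed.

Lemma PrOut_insdel1_le eps P x x' E : eps_DP eps P -> insdel1 x x' ->
  PrOut P (env_of x) E <= exp eps * PrOut P (env_of x') E.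
Proof.
  intros HDP Hxx'; apply (HDP x x'); [right; exact Hxx' | apply env_of_compatible ..].
Qed.

(* Group privacy along the path that turns the ones into zeros one at a time:
   delete the last one, then insert a zero. *)
Lemma PrOut_block_data_le eps P a j z E : eps_DP eps P ->
  PrOut P (env_of (block_data a j z)) E
  <= exp eps ^ (2 * j) * PrOut P (env_of (repeat false (a + j + z))) E.
Proof.
  intros HDP; revert z; induction j as [|j IH]; intros z.
  - unfold block_data; cbn [repeat app]; rewrite Nat.add_0_r, <- repeat_app, Nat.mul_0_r.
    rewrite pow_O; lra.
  - set (A := repeat false a ++ repeat true j).
    assert (Hdel : insdel1 (block_data a (S j) z) (block_data a j z)).
    { exists A, (repeat false z), true; right; split; unfold block_data, A;
        rewrite <- app_assoc; auto.
      replace (S j) with (j + 1)%nat by lia; rewrite repeat_app, <- !app_assoc; auto. }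
    assert (Hins : insdel1 (block_data a j z) (block_data a j (S z))).
    { exists A, (repeat false z), false; left; split; unfold block_data, A;
        rewrite <- app_assoc; auto. }
    pose proof (PrOut_insdel1_le eps P _ _ E HDP Hdel) as H1.
    pose proof (PrOut_insdel1_le eps P _ _ E HDP Hins) as H2.
    specialize (IH (S z)); replace (a + j + S z)%nat with (a + S j + z)%nat in IH by lia.
    pose proof (exp_pos eps); pose proof (PrOut_nonneg P (env_of (block_data a j z)) E).
    replace (exp eps ^ (2 * S j)) with (exp eps * exp eps * exp eps ^ (2 * j))
      by (replace (2 * S j)%nat with (S (S (2 * j))) by lia; simpl; ring).
    apply (Rle_trans _ _ _ H1).
    apply Rle_trans with (exp eps * (exp eps * PrOut P (env_of (block_data a j (S z))) E)).
    + apply Rmult_le_compat_l; lra.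
    + rewrite !Rmult_assoc.
      repeat (apply Rmult_le_compat_l; [lra|]); exact IH.
Qed.

Lemma nat_mult_unbounded A c : 0 < c -> exists N, (0 < N)%nat /\ A < INR N * c.
Proof.
  intros Hc; destruct (INR_unbounded (A / c)) as [N HN]; exists (S N); split; [lia|].
  rewrite S_INR; apply Rmult_lt_compat_r with (r := c) in HN; auto.
  unfold Rdiv in HN; rewrite Rmult_assoc, Rinv_l in HN; lra.
Qed.

Lemma Rabs_near_grid_unique u v i j : 0 < u ->
  Rabs (v - INR i * u) <= u / 4 -> Rabs (v - INR j * u) <= u / 4 -> i = j.
Proof.
  intros Hu Hi Hj; apply Rabs_le_between in Hi, Hj.
  destruct (Nat.lt_total i j) as [Hij | [-> | Hij]]; auto; exfalso;
    apply le_INR in Hij; rewrite S_INR in Hij; nra.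
Qed.

Section Lower_bound.

Variables (eps : R) (P : program) (dec : list nat -> R).
Hypothesis P_DP : eps_DP eps P.
Hypothesis P_time : forall x x' env env' t, compatible x env -> compatible x' env' ->
  PrTime P env t = PrTime P env' t.

Definition accurate (v al : R) (y : list nat) : bool := Rleb (Rabs (dec y - v)) al.

Lemma PrOut_uniform_tail g : 0 < g ->
  exists T, forall x E, PrOut P (env_of x) E <= PrOutBy P (env_of x) T E + g.
Proof.
  intros Hg; destruct (halt_mass_settles P (env_of []) g Hg) as [T HT].
  exists T; intros x E; apply PrOut_le_PrOutBy_add; intros k.
  assert (Hindep : forall k, halt_mass P (env_of x) k = halt_mass P (env_of []) k).
  { intros k'; rewrite !halt_mass_sum_PrTime; apply sumR_eq_in; intros t _.
    apply (P_time x []); apply env_of_compatible. }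
  rewrite !Hindep; apply HT.
Qed.

Definition cell_cost (C : R) (T n i : nat) : R :=
  cumul_expect P (reads_cell P i) T (init (env_of (repeat false n)))
  + C * PrOutBy P (env_of (repeat false n)) T (out_nonzero i).

Lemma cell_cost_nonneg C T n i : 0 <= C -> 0 <= cell_cost C T n i.
Proof.
  intros HC; unfold cell_cost.
  pose proof (cumul_expect_nonneg P (reads_cell P i) T _
                (init_weights_nonneg (env_of (repeat false n)))
                (fun c => proj1 (ind_bounds _))).
  pose proof (PrOutBy_bounds P (env_of (repeat false n)) T (out_nonzero i)); nra.
Qed.

(* Over [T] steps at most [2T] cell reads happen and at most [T] output entries are nonzero,
   so some block of [K] consecutive cells has small total cost. *)
Lemma cheap_block_exists C T m K : 0 <= C -> (0 < m)%nat ->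
  exists b, (b < m)%nat /\
    sumR (seq (1 + b * K) K) (cell_cost C T (m * K)) <= (2 + C) * INR T / INR m.
Proof.
  intros HC Hm; apply sumR_pigeonhole; auto.
  rewrite <- sumR_seq_blocks; unfold cell_cost.
  rewrite sumR_plus, sumR_scal.
  pose proof (sumR_reads_cell_le P (m * K) T _
                (init_weights_nonneg (env_of (repeat false (m * K))))).
  pose proof (sumR_PrOutBy_out_nonzero_le P (m * K) T).
  simpl expect in *; apply lt_0_INR in Hm.
  replace (INR m * ((2 + C) * INR T / INR m)) with ((2 + C) * INR T) by (field; lra).
  nra.
Qed.

Lemma PrOutBy_block_data_cost_le a j z T g C E :
  (forall x E', PrOut P (env_of x) E' <= PrOutBy P (env_of x) T E' + g) ->
  exp eps ^ (2 * j) <= C ->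
  PrOutBy P (env_of (block_data a j z)) T E <=
    PrOutBy P (env_of (repeat false (a + j + z))) T E
    + sumR (seq (a + 1) j) (cell_cost C T (a + j + z)) + INR j * (C * g).
Proof.
  intros Htail HC.
  pose proof (PrOutBy_block_data_le P a j z T E) as Hcoupled; cbv zeta in Hcoupled.
  assert (Hexposed : forall i, PrOutBy P (env_of (block_data a j z)) T (out_nonzero i)
            <= C * PrOutBy P (env_of (repeat false (a + j + z))) T (out_nonzero i) + C * g).
  { intros i.
    pose proof (PrOutBy_le_PrOut P (env_of (block_data a j z)) T (out_nonzero i)).
    pose proof (PrOut_block_data_le eps P a j z (out_nonzero i) P_DP).
    pose proof (PrOut_nonneg P (env_of (repeat false (a + j + z))) (out_nonzero i)).
    pose proof (Htail (repeat false (a + j + z)) (out_nonzero i)).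
    pose proof (pow_le (exp eps) (2 * j) (Rlt_le _ _ (exp_pos eps))).
    nra. }
  assert (Hsum :
    sumR (seq (a + 1) j) (fun i => PrOutBy P (env_of (block_data a j z)) T (out_nonzero i))
    <= sumR (seq (a + 1) j)
         (fun i => C * PrOutBy P (env_of (repeat false (a + j + z))) T (out_nonzero i))
       + INR j * (C * g)).
  { replace (INR j * (C * g)) with (sumR (seq (a + 1) j) (fun _ => C * g))
      by (rewrite sumR_const, length_seq; ring).
    rewrite <- sumR_plus; apply sumR_le; intros; apply Hexposed. }
  unfold cell_cost; rewrite sumR_plus; lra.
Qed.

Lemma accurate_on_zeros c0 g C T a K r :
  let n := (a + K + r)%nat in
  (0 < n)%nat ->
  (forall x al, (0 < length x)%nat -> 0 < al -> c0 <= PrOut P (env_of x) (accurate (mean x) al)) ->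
  (forall x E, PrOut P (env_of x) E <= PrOutBy P (env_of x) T E + g) ->
  (forall j, (j <= K)%nat -> exp eps ^ (2 * j) <= C) -> 0 <= C ->
  g * (1 + INR K * C) <= c0 / 4 ->
  sumR (seq (a + 1) K) (cell_cost C T n) <= c0 / 4 ->
  forall j, (j <= K)%nat ->
  c0 / 2 <= PrOutBy P (env_of (repeat false n)) T (accurate (INR j / INR n) (/ (4 * INR n))).
Proof.
  intros n Hn Hacc Htail HC HC0 Hg Hblock j Hj.
  set (z := (K - j + r)%nat).
  assert (Hlen : (a + j + z)%nat = n) by (unfold n, z; lia).
  assert (Hnpos : 0 < INR n) by (apply lt_0_INR; auto).
  pose proof (Hacc (block_data a j z) (/ (4 * INR n))) as Hfar.
  rewrite block_data_length, mean_block_data, Hlen in Hfar.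
  specialize (Hfar Hn ltac:(apply Rinv_0_lt_compat; lra)).
  pose proof (Htail (block_data a j z) (accurate (INR j / INR n) (/ (4 * INR n)))) as Htj.
  pose proof (PrOutBy_block_data_cost_le a j z T g C (accurate (INR j / INR n) (/ (4 * INR n)))
                Htail (HC j Hj)) as Hcost.
  rewrite Hlen in Hcost.
  assert (Hpart : sumR (seq (a + 1) j) (cell_cost C T n) <= sumR (seq (a + 1) K) (cell_cost C T n)).
  { replace (seq (a + 1) K) with (seq (a + 1) (j + (K - j))) by (f_equal; lia).
    rewrite seq_app, sumR_app.
    pose proof (sumR_nonneg (seq (a + 1 + j) (K - j)) (cell_cost C T n)
                  (fun i => cell_cost_nonneg C T n i HC0)); lra. }
  assert (Hjg : INR j * (C * g) <= INR K * C * g).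
  { apply le_INR in Hj.
    assert (0 <= g).
    { pose proof (Htail [] (fun _ => true)).
      pose proof (PrOutBy_le_PrOut P (env_of []) T (fun _ => true)); lra. }
    assert (0 <= C * g) by (apply Rmult_le_pos; lra); nra. }
  lra.
Qed.

(* The accuracy events around the grid points [j/n] are pairwise disjoint. *)
Lemma sumR_PrOutBy_accurate_grid_le e T n K : (0 < n)%nat ->
  sumR (seq 0 (S K)) (fun j => PrOutBy P e T (accurate (INR j / INR n) (/ (4 * INR n)))) <= 1.
Proof.
  intros Hn; apply lt_0_INR in Hn.
  rewrite (sumR_eq_in _ _ (fun j => expect (halts_in P (accurate (INR j / INR n) (/ (4 * INR n))))
                                      (run P T (init e)))) by (intros; apply PrOutBy_expect).
  rewrite <- expect_sumR.
  apply Rle_trans with (expect (fun _ => 1) (run P T (init e))).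
  - apply expect_le; [apply run_init_weights_nonneg|]; intros c.
    apply (sumR_ind_exclusive (seq 0 (S K))
             (fun j => halted P c && accurate (INR j / INR n) (/ (4 * INR n)) (output c)));
      [apply seq_NoDup|].
    intros i j _ _ Hij Hi.
    destruct (accurate (INR j / INR n) (/ (4 * INR n)) (output c)) eqn:Hj;
      [| apply andb_false_r].
    apply andb_true_iff in Hi as [_ Hi]; exfalso; apply Hij.
    unfold accurate, Rleb in Hi, Hj.
    destruct (Rle_dec _ _) as [Hi' |] in Hi; [| discriminate].
    destruct (Rle_dec _ _) as [Hj' |] in Hj; [| discriminate].
    apply (Rabs_near_grid_unique (/ INR n) (dec (output c))); [apply Rinv_0_lt_compat; lra | ..];
      replace (/ INR n / 4) with (/ (4 * INR n)) by (field; lra); assumption.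
  - rewrite run_total_mass; simpl; lra.
Qed.

Lemma not_uniformly_accurate c0 : 0 < c0 ->
  ~ (forall x al, (0 < length x)%nat -> 0 < al -> c0 <= PrOut P (env_of x) (accurate (mean x) al)).
Proof.
  intros Hc0 Hacc.
  destruct (nat_mult_unbounded 2 c0 Hc0) as [K [HK0 HK]].
  set (C := Rmax 1 (exp eps) ^ (2 * K)).
  assert (HC1 : 1 <= C) by apply pow_R1_Rle, Rmax_l.
  assert (HCj : forall j, (j <= K)%nat -> exp eps ^ (2 * j) <= C).
  { intros j Hj; apply Rle_trans with (Rmax 1 (exp eps) ^ (2 * j)).
    - apply pow_incr; split; [apply Rlt_le, exp_pos | apply Rmax_r].
    - apply Rle_pow; [apply Rmax_l | lia]. }
  assert (HKC : 0 <= INR K * C) by (apply Rmult_le_pos; [apply pos_INR | lra]).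
  set (g := c0 / (4 * (1 + INR K * C))).
  assert (Hg : g * (1 + INR K * C) = c0 / 4) by (unfold g; field; lra).
  destruct (PrOut_uniform_tail g) as [T Htail]; [unfold g; apply Rdiv_lt_0_compat; lra|].
  destruct (nat_mult_unbounded (4 * ((2 + C) * INR T)) c0 Hc0) as [m [Hm HmT]].
  destruct (cheap_block_exists C T m K ltac:(lra) Hm) as [b [Hb Hblock]].
  set (r := (m * K - b * K - K)%nat).
  assert (Hn : (b * K + K + r)%nat = (m * K)%nat).
  { assert (S b * K <= m * K)%nat by (apply Nat.mul_le_mono_r; lia); unfold r; lia. }
  assert (Hnpos : (0 < m * K)%nat) by (apply Nat.mul_pos_pos; auto).
  assert (Hcheap : sumR (seq (b * K + 1) K) (cell_cost C T (m * K)) <= c0 / 4).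
  { rewrite Nat.add_comm; apply (Rle_trans _ _ _ Hblock).
    apply lt_0_INR in Hm; apply Rmult_le_reg_r with (INR m); auto.
    replace ((2 + C) * INR T / INR m * INR m) with ((2 + C) * INR T) by (field; lra); lra. }
  pose proof (accurate_on_zeros c0 g C T (b * K) K r) as Hzeros; cbv zeta in Hzeros.
  rewrite Hn in Hzeros.
  specialize (Hzeros Hnpos Hacc Htail HCj ltac:(lra) ltac:(lra) Hcheap).
  pose proof (sumR_PrOutBy_accurate_grid_le (env_of (repeat false (m * K))) T (m * K) K Hnpos).
  assert (Hlow : INR (S K) * (c0 / 2) <= sumR (seq 0 (S K)) (fun j =>
            PrOutBy P (env_of (repeat false (m * K))) T
              (accurate (INR j / INR (m * K)) (/ (4 * INR (m * K)))))).
  { replace (INR (S K) * (c0 / 2)) with (sumR (seq 0 (S K)) (fun _ => c0 / 2))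
      by (rewrite sumR_const, length_seq; ring).
    apply sumR_le; intros j Hj; apply in_seq in Hj; apply Hzeros; lia. }
  rewrite S_INR in Hlow; lra.
Qed.

End Lower_bound.

Lemma PrOut_env_of_ge eps P x env E : eps_DP eps P -> compatible x env ->
  PrOut P env E / exp eps <= PrOut P (env_of x) E.
Proof.
  intros HDP Henv.
  pose proof (HDP x x env (env_of x) (or_introl eq_refl) Henv (env_of_compatible x) E).
  pose proof (exp_pos eps).
  apply Rmult_le_reg_r with (exp eps); auto.
  replace (PrOut P env E / exp eps * exp eps) with (PrOut P env E) by (field; lra); lra.
Qed.

Theorem mainTheorem11 (eps : R) (P : program) (dec : list nat -> R) :
  eps_DP eps P ->
  (forall x x' env env' t, compatible x env -> compatible x' env' ->
     PrTime P env t = PrTime P env' t) ->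
  forall beta : R, 0 < beta < 1 ->
  exists (x : list bool) (alpha : R),
    (0 < length x)%nat /\ 0 < alpha /\
    forall env, compatible x env ->
      1 - PrOut P env (fun y => Rleb (Rabs (dec y - mean x)) alpha) > beta.
Proof.
  intros HDP Htime beta Hbeta; apply NNPP; intros Hfail.
  apply (not_uniformly_accurate eps P dec HDP Htime ((1 - beta) / exp eps)).
  { apply Rdiv_lt_0_compat; [lra | apply exp_pos]. }
  intros x al Hx Hal.
  destruct (classic (exists env, compatible x env /\
                       1 - PrOut P env (accurate dec (mean x) al) <= beta))
    as [[env [Henv Hle]] | Hnone].
  - pose proof (PrOut_env_of_ge eps P x env (accurate dec (mean x) al) HDP Henv).
    pose proof (exp_pos eps).
    apply Rle_trans with (PrOut P env (accurate dec (mean x) al) / exp eps); auto.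
    unfold Rdiv; apply Rmult_le_compat_r; [apply Rlt_le, Rinv_0_lt_compat|]; lra.
  - exfalso; apply Hfail; exists x, al; repeat split; auto.
    intros env Henv; apply Rnot_le_gt; intros Hle; apply Hnone; exists env; auto.
Qed.
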